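(* Let $(E,P,\vartheta)$ be a bipolar metric space and let $F\colon E\cup P\to E\cup P$ with $F(E)\subseteq E$, $F(P)\subseteq P$ be a polynomial contraction, i.e. there exist $\pi\in(0,1)$, an integer $\sigma\geq1$ and functions $q_\upsilon\colon E\times P\to[0,\infty)$, $\upsilon=0,\dots,\sigma$, such that $$\sum_{\upsilon=0}^{\sigma} q_\upsilon(Fe,Ff)\,\vartheta^\upsilon(Fe,Ff)\leq \pi\sum_{\upsilon=0}^{\sigma} q_\upsilon(e,f)\,\vartheta^\upsilon(e,f)\quad\text{for all } e\in E,\ f\in P.$$ Assume (i) $q_0(e,f)=0$ for all $e\in E$, $f\in P$; (ii) for every $\upsilon\in\{1,\dots,\sigma\}$ there is $W_\upsilon>0$ with $q_\upsilon(e,f)\leq W_\upsilon$ for all $e\in E$, $f\in P$; (iii) there exist $\varrho\in\{1,\dots,\sigma\}$ and $Q_\varrho>0$ with $q_\varrho(e,f)\geq Q_\varrho$ for all $e\in E$, $f\in P$. Then $F$ is continuous.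
   Context: A bipolar metric space is a triple $(E,P,\vartheta)$ where $E,P$ are nonempty sets and $\vartheta\colon E\times P\to[0,\infty)$ satisfies: (1) for $e\in E$, $f\in P$, $\vartheta(e,f)=0$ iff $e=f$; (2) $\vartheta(e,f)=\vartheta(f,e)$ whenever $e,f\in E\cap P$; (3) $\vartheta(e,f)\leq\vartheta(e,z)+\vartheta(r,z)+\vartheta(r,f)$ for all $e,r\in E$, $z,f\in P$. A sequence $(x_n)$ in $E$ converges to $y\in P$ if $\vartheta(x_n,y)\to0$; a sequence $(y_n)$ in $P$ converges to $x\in E$ if $\vartheta(x,y_n)\to0$. $F$ is continuous if whenever a sequence $(u_n)$ (in $E$ or in $P$) converges to a point $v$, the sequence $(Fu_n)$ converges to $Fv$. $\vartheta^\upsilon$ denotes the $\upsilon$-th power of $\vartheta$, with $\vartheta^0\equiv1$. *)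

From Stdlib Require Import Reals.
Open Scope R_scope.

(* A bipolar metric space (E,P,d): E and P are subsets (predicates) of a common
   ambient type X (so that E ∩ P makes sense); d is only used on E × P. *)
Definition bipolar_metric_space {X : Type} (E P : X -> Prop) (d : X -> X -> R) : Prop :=
  (exists e, E e) /\ (exists f, P f) /\
  (forall e f, E e -> P f -> 0 <= d e f) /\
  (forall e f, E e -> P f -> (d e f = 0 <-> e = f)) /\
  (forall e f, E e -> P e -> E f -> P f -> d e f = d f e) /\
  (forall e r z f, E e -> E r -> P z -> P f ->
     d e f <= d e z + d r z + d r f).

Definition bp_conv_EP {X : Type} (d : X -> X -> R) (x : nat -> X) (y : X) : Prop :=
  Un_cv (fun n => d (x n) y) 0.

Definition bp_conv_PE {X : Type} (d : X -> X -> R) (y : nat -> X) (x : X) : Prop :=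
  Un_cv (fun n => d x (y n)) 0.

Definition bp_continuous {X : Type} (E P : X -> Prop) (d : X -> X -> R) (F : X -> X) : Prop :=
  (forall (u : nat -> X) (v : X), (forall n, E (u n)) -> P v ->
     bp_conv_EP d u v -> bp_conv_EP d (fun n => F (u n)) (F v)) /\
  (forall (u : nat -> X) (v : X), (forall n, P (u n)) -> E v ->
     bp_conv_PE d u v -> bp_conv_PE d (fun n => F (u n)) (F v)).

Definition poly_sum {X : Type} (q : nat -> X -> X -> R) (d : X -> X -> R)
  (sigma : nat) (e f : X) : R :=
  sum_f_R0 (fun u => q u e f * d e f ^ u) sigma.

(** For [d e f <= 1] the right-hand side of the contraction inequality is at
    most a constant times [d e f]: [q_0] vanishes, the other coefficients are
    bounded and [d^u <= d] for [u >= 1].  The left-hand side is at least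
    [Q_rho d(Fe,Ff)^rho].  Hence [d(Fe,Ff)^rho = O(d e f)], so [d(Fe,Ff)] is
    small whenever [d e f] is, uniformly in [e, f]; this gives continuity for
    sequences in [E] and in [P] alike. *)

From Stdlib Require Import Reals Lra Lia.
Open Scope R_scope.

Lemma sum_f_R0_nonneg (a : nat -> R) (n : nat) :
  (forall i, (i <= n)%nat -> 0 <= a i) -> 0 <= sum_f_R0 a n.
Proof.
  intros a_ge0.
  replace 0 with (sum_f_R0 (fun _ => 0) n) by (rewrite sum_cte; ring).
  now apply sum_Rle.
Qed.

Lemma sum_f_R0_term_le (a : nat -> R) (n k : nat) :
  (forall i, (i <= n)%nat -> 0 <= a i) -> (k <= n)%nat -> a k <= sum_f_R0 a n.
Proof.
  induction n as [|n IH]; intros a_ge0 k_le.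
  - replace k with 0%nat by lia. simpl. lra.
  - simpl.
    assert (0 <= sum_f_R0 a n) by (apply sum_f_R0_nonneg; auto).
    assert (0 <= a (S n)) by auto.
    destruct (Nat.eq_dec k (S n)) as [->|k_ne]; [lra|].
    assert (a k <= sum_f_R0 a n) by (apply IH; auto; lia).
    lra.
Qed.

Lemma pow_le_base (x : R) (u : nat) : 0 <= x <= 1 -> (1 <= u)%nat -> x ^ u <= x.
Proof.
  intros x01 u_ge1. replace u with (S (u - 1)) by lia. simpl.
  assert (x ^ (u - 1) <= 1) by (rewrite <- (pow1 (u - 1)); apply pow_incr; lra).
  nra.
Qed.

Lemma poly_no_constant_le_linear (c : nat -> R) (W x : R) (n : nat) :
  0 <= x <= 1 -> 0 <= W -> c 0%nat = 0 ->
  (forall u, (u <= n)%nat -> 0 <= c u <= W) ->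
  sum_f_R0 (fun u => c u * x ^ u) n <= INR (S n) * W * x.
Proof.
  intros x01 W_ge0 c0 c_bounds.
  replace (INR (S n) * W * x) with (sum_f_R0 (fun _ => W * x) n)
    by (rewrite sum_cte; ring).
  apply sum_Rle. intros u u_le.
  destruct u as [|u]; [rewrite c0; nra|].
  specialize (c_bounds (S u) u_le).
  assert (x ^ S u <= x) by (apply pow_le_base; [lra|lia]).
  assert (0 <= x ^ S u) by (apply pow_le; lra).
  nra.
Qed.

Lemma finite_family_upper_bound {A B : Type} (DA : A -> Prop) (DB : B -> Prop)
  (g : nat -> A -> B -> R) (n : nat) :
  (forall u, (u <= n)%nat -> exists W, forall a b, DA a -> DB b -> g u a b <= W) ->
  exists W, 0 <= W /\ forall u a b, (u <= n)%nat -> DA a -> DB b -> g u a b <= W.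
Proof.
  induction n as [|n IH]; intros bounded.
  - destruct (bounded 0%nat) as [W HW]; [lia|].
    exists (Rmax 0 W). split; [apply Rmax_l|].
    intros u a b u_le Ha Hb. replace u with 0%nat by lia.
    eapply Rle_trans; [apply HW; auto|apply Rmax_r].
  - destruct IH as [W [W_ge0 HW]]; [intros; apply bounded; lia|].
    destruct (bounded (S n)) as [W' HW']; [lia|].
    exists (Rmax W W'). split; [eapply Rle_trans; [apply W_ge0|apply Rmax_l]|].
    intros u a b u_le Ha Hb.
    destruct (Nat.eq_dec u (S n)) as [->|u_ne].
    + eapply Rle_trans; [apply HW'; auto|apply Rmax_r].
    + eapply Rle_trans; [apply HW; auto; lia|apply Rmax_l].
Qed.

Lemma Un_cv_0_of_modulus (a b : nat -> R) :
  (forall n, 0 <= a n) -> (forall n, 0 <= b n) ->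
  (forall eps, 0 < eps -> exists delta, 0 < delta /\ forall n, a n < delta -> b n < eps) ->
  Un_cv a 0 -> Un_cv b 0.
Proof.
  intros a_ge0 b_ge0 modulus a_cv eps eps_gt0.
  destruct (modulus eps eps_gt0) as [delta [delta_gt0 Hdelta]].
  destruct (a_cv delta delta_gt0) as [N HN].
  exists N. intros n n_ge. specialize (HN n n_ge).
  unfold R_dist in *. rewrite Rminus_0_r, Rabs_right in * by (apply Rle_ge; auto).
  auto.
Qed.

Definition bp_uniformly_continuous {X : Type} (E P : X -> Prop) (d : X -> X -> R)
  (F : X -> X) : Prop :=
  forall eps, 0 < eps -> exists delta, 0 < delta /\
    forall e f, E e -> P f -> d e f < delta -> d (F e) (F f) < eps.

Section BipolarSelfMap.

Variables (X : Type) (E P : X -> Prop) (d : X -> X -> R) (F : X -> X).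
Hypothesis d_ge0 : forall e f, E e -> P f -> 0 <= d e f.
Hypothesis F_E : forall e, E e -> E (F e).
Hypothesis F_P : forall f, P f -> P (F f).

Lemma bp_uniformly_continuous_continuous :
  bp_uniformly_continuous E P d F -> bp_continuous E P d F.
Proof.
  intros unif. split; intros u v Hu Hv; apply Un_cv_0_of_modulus; auto;
    intros eps eps_gt0; destruct (unif eps eps_gt0) as [delta [delta_gt0 Hdelta]];
    exists delta; split; auto.
Qed.

Lemma bp_uniformly_continuous_of_power_estimate (Q K : R) (rho : nat) :
  0 < Q -> 0 <= K ->
  (forall e f, E e -> P f -> d e f <= 1 -> Q * d (F e) (F f) ^ rho <= K * d e f) ->
  bp_uniformly_continuous E P d F.
Proof.
  intros Q_gt0 K_ge0 estimate eps eps_gt0.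
  assert (eps_pow_gt0 : 0 < eps ^ rho) by (apply pow_lt; lra).
  (* Below this threshold [K * d e f < Q * eps ^ rho], so [d (F e) (F f) >= eps]
     would contradict the estimate. *)
  set (threshold := Q * eps ^ rho / (K + 1)).
  assert (threshold_gt0 : 0 < threshold)
    by (apply Rdiv_lt_0_compat; [apply Rmult_lt_0_compat|]; lra).
  exists (Rmin 1 threshold). split; [apply Rmin_glb_lt; lra|].
  intros e f He Hf close.
  pose proof (Rmin_l 1 threshold). pose proof (Rmin_r 1 threshold).
  pose proof (d_ge0 e f He Hf).
  assert (linear_small : K * d e f < Q * eps ^ rho).
  { replace (Q * eps ^ rho) with ((K + 1) * threshold)
      by (unfold threshold; field; lra).
    nra. }
  specialize (estimate e f He Hf ltac:(lra)).
  destruct (Rlt_or_le (d (F e) (F f)) eps) as [|far]; [assumption|].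
  assert (eps ^ rho <= d (F e) (F f) ^ rho) by (apply pow_incr; lra).
  nra.
Qed.

Variables (q : nat -> X -> X -> R) (sigma : nat).
Hypothesis q_ge0 : forall u e f, (u <= sigma)%nat -> E e -> P f -> 0 <= q u e f.

Lemma poly_sum_ge_monomial (rho : nat) (e f : X) :
  (rho <= sigma)%nat -> E e -> P f -> q rho e f * d e f ^ rho <= poly_sum q d sigma e f.
Proof.
  intros rho_le He Hf. unfold poly_sum.
  apply (sum_f_R0_term_le (fun u => q u e f * d e f ^ u)); [|assumption].
  intros u u_le. apply Rmult_le_pos; [auto|apply pow_le; auto].
Qed.

Lemma poly_contraction_power_estimate (pi W Q : R) (rho : nat) :
  pi <= 1 ->
  (forall e f, E e -> P f ->
     poly_sum q d sigma (F e) (F f) <= pi * poly_sum q d sigma e f) ->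
  0 <= W -> (forall e f, E e -> P f -> q 0%nat e f = 0) ->
  (forall u e f, (u <= sigma)%nat -> E e -> P f -> q u e f <= W) ->
  (rho <= sigma)%nat -> (forall e f, E e -> P f -> Q <= q rho e f) ->
  forall e f, E e -> P f -> d e f <= 1 ->
    Q * d (F e) (F f) ^ rho <= INR (S sigma) * W * d e f.
Proof.
  intros pi_le1 contraction W_ge0 q0 q_le rho_le q_rho_ge e f He Hf close.
  assert (image_dominates :
            Q * d (F e) (F f) ^ rho <= poly_sum q d sigma (F e) (F f)).
  { eapply Rle_trans; [|apply (poly_sum_ge_monomial rho); auto].
    apply Rmult_le_compat_r; [apply pow_le; auto|auto]. }
  assert (0 <= poly_sum q d sigma e f).
  { eapply Rle_trans; [|apply (poly_sum_ge_monomial 0%nat); auto; lia].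
    simpl. rewrite q0 by assumption. lra. }
  pose proof (contraction e f He Hf).
  assert (poly_sum q d sigma e f <= INR (S sigma) * W * d e f).
  { apply poly_no_constant_le_linear; auto. }
  nra.
Qed.

End BipolarSelfMap.

Theorem proposition3p4 {X : Type} (E P : X -> Prop) (d : X -> X -> R) (F : X -> X)
  (pi : R) (sigma : nat) (q : nat -> X -> X -> R) :
  bipolar_metric_space E P d ->
  (forall e, E e -> E (F e)) ->
  (forall f, P f -> P (F f)) ->
  0 < pi < 1 ->
  (1 <= sigma)%nat ->
  (forall u e f, (u <= sigma)%nat -> E e -> P f -> 0 <= q u e f) ->
  (forall e f, E e -> P f ->
     poly_sum q d sigma (F e) (F f) <= pi * poly_sum q d sigma e f) ->
  (forall e f, E e -> P f -> q 0%nat e f = 0) ->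
  (forall u, (1 <= u <= sigma)%nat ->
     exists W, 0 < W /\ forall e f, E e -> P f -> q u e f <= W) ->
  (exists rho, (1 <= rho <= sigma)%nat /\
     exists Q, 0 < Q /\ forall e f, E e -> P f -> Q <= q rho e f) ->
  bp_continuous E P d F.
Proof.
  intros [_ [_ [d_ge0 _]]] F_E F_P pi_bounds _ q_ge0 contraction q0 q_bounded
    [rho [rho_bounds [Q [Q_gt0 q_rho_ge]]]].
  destruct (finite_family_upper_bound E P q sigma) as [W [W_ge0 q_le]].
  { intros [|u] u_le.
    - exists 0. intros e f He Hf. rewrite q0 by assumption. lra.
    - destruct (q_bounded (S u)) as [W [_ HW]]; [lia|]. now exists W. }
  apply bp_uniformly_continuous_continuous; auto.
  apply (bp_uniformly_continuous_of_power_estimate _ _ _ _ _ d_ge0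
           Q (INR (S sigma) * W) rho Q_gt0).
  - apply Rmult_le_pos; [apply pos_INR|assumption].
  - apply (poly_contraction_power_estimate _ _ _ _ _ d_ge0 F_E F_P q sigma q_ge0 pi);
      auto; [lra|lia].
Qed.
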